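(* Let $\mathbf C$ be a category of coframes. The forgetful functor $|\_|:\mathbf C^{\mathrm{conv}}\to\mathbf C$ is topological: every sink $(\varphi_i:|L_i|\to L)_{i\in I}$ (with $I$ any class, each $L_i$ a convergence $\mathbf C$-object, each $\varphi_i$ a $\mathbf C$-morphism) has a unique final lift, namely $(L,\lim_L)$ with $\lim_L\mathcal F=\bigwedge_{i\in I}\varphi_i(\lim_{L_i}\varphi_i^{-1}(\mathcal F))$ for $\mathcal F\in\mathbb F L$. The same holds for the restriction of $|\_|$ to the full subcategory $\mathbf C^{\mathrm{conv}}_{\mathrm{cl}}$ of classical convergence $\mathbf C$-objects.
   Context: A category of coframes has coframes (complete lattices in which arbitrary infima distribute over binary suprema) as objects and coframe morphisms (maps preserving arbitrary infima and finite suprema) as morphisms. A filter on $L$ is a non-empty upward-closed subset closed under binary meets ($L$ allowed); $\mathbb F L$ is the set of filters. A convergence $\mathbf C$-object is $(L,\lim_L)$ with $\lim_L:\mathbb F L\to L$ monotone (a convergence structure on $L$); morphisms of $\mathbf C^{\mathrm{conv}}$ are $\mathbf C$-morphisms $\varphi:L\to L'$ with $\lim_{L'}\mathcal F\le\varphi(\lim_L\varphi^{-1}(\mathcal F))$ for all $\mathcal F\in\mathbb F L'$ (continuity). $|\_|$ sends $(L,\lim_L)$ to $L$. A lift of the sink is a convergence structure on $L$ making every $\varphi_i$ continuous; it is final if for every $\mathbf C$-morphism $\psi:L\to|L'|$ with $L'$ a convergence $\mathbf C$-object, $\psi$ is continuous iff $\psi\circ\varphi_i$ is continuous for every $i$.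 $\mathcal C_L$ denotes the set of complemented elements of $L$; $(L,\lim_L)$ is classical if $\mathcal F\cap\mathcal C_L=\mathcal G\cap\mathcal C_L$ implies $\lim_L\mathcal F=\lim_L\mathcal G$. *)

Set Implicit Arguments.
Unset Strict Implicit.

Record coframe := Coframe {
  car :> Type;
  le : car -> car -> Prop;
  inf : (car -> Prop) -> car;
  sup2 : car -> car -> car;
  le_refl : forall x, le x x;
  le_trans : forall x y z, le x y -> le y z -> le x z;
  le_antisym : forall x y, le x y -> le y x -> x = y;
  inf_lb : forall (S : car -> Prop) x, S x -> le (inf S) x;
  inf_glb : forall (S : car -> Prop) y, (forall x, S x -> le y x) -> le y (inf S);
  sup2_ub_l : forall x y, le x (sup2 x y);
  sup2_ub_r : forall x y, le y (sup2 x y);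
  sup2_lub : forall x y z, le x z -> le y z -> le (sup2 x y) z;
  inf_sup2_distr : forall a (S : car -> Prop),
    sup2 a (inf S) = inf (fun y => exists s, S s /\ y = sup2 a s)
}.

Arguments le {c}.
Arguments inf {c}.
Arguments sup2 {c}.

Definition top (L : coframe) : L := inf (fun _ : L => False).
Definition bot (L : coframe) : L := inf (fun _ : L => True).
Definition meet2 (L : coframe) (a b : L) : L := inf (fun x => x = a \/ x = b).

Definition image (A B : Type) (f : A -> B) (S : A -> Prop) : B -> Prop :=
  fun y => exists x, S x /\ y = f x.

Definition is_cofrm_mor (L L' : coframe) (f : L -> L') : Prop :=
  (forall S : L -> Prop, f (inf S) = inf (image f S)) /\
  f (bot L) = bot L' /\
  (forall a b, f (sup2 a b) = sup2 (f a) (f b)).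

Record cofcat := CofCat {
  ob : coframe -> Prop;
  mor : forall L L' : coframe, (L -> L') -> Prop;
  mor_cofrm : forall (L L' : coframe) (f : L -> L'), mor f -> is_cofrm_mor f;
  mor_id : forall L : coframe, ob L -> mor (fun x : L => x);
  mor_comp : forall (L1 L2 L3 : coframe) (f : L1 -> L2) (g : L2 -> L3),
    mor f -> mor g -> mor (fun x => g (f x))
}.

Definition is_filter (L : coframe) (F : L -> Prop) : Prop :=
  (exists x, F x) /\
  (forall x y, F x -> le x y -> F y) /\
  (forall x y, F x -> F y -> F (meet2 x y)).

(* A convergence structure is represented by a map on subsets, of which only
   the values on filters are relevant; it must be monotone on filters. *)
Definition is_conv (L : coframe) (lim : (L -> Prop) -> L) : Prop :=
  forall F G : L -> Prop, is_filter F -> is_filter G ->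
    (forall x, F x -> G x) -> le (lim F) (lim G).

Definition preim (L L' : coframe) (f : L -> L') (F : L' -> Prop) : L -> Prop :=
  fun a => F (f a).

Definition continuous (L L' : coframe) (limL : (L -> Prop) -> L)
  (limL' : (L' -> Prop) -> L') (f : L -> L') : Prop :=
  forall F : L' -> Prop, is_filter F -> le (limL' F) (f (limL (preim f F))).

Arguments continuous {L L'} limL limL' f.
Arguments is_conv {L} lim.
Arguments preim {L L'} f F.

Definition complemented (L : coframe) (a : L) : Prop :=
  exists b, meet2 a b = bot L /\ sup2 a b = top L.

Arguments complemented {L} a.

Definition classical (L : coframe) (lim : (L -> Prop) -> L) : Prop :=
  forall F G : L -> Prop, is_filter F -> is_filter G ->
    (forall a, complemented a -> (F a <-> G a)) -> lim F = lim G.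

Section Sink.
Variables (L : coframe) (I : Type) (Li : I -> coframe)
  (limi : forall i, (Li i -> Prop) -> Li i) (phi : forall i, Li i -> L).

Definition is_lift (lim : (L -> Prop) -> L) : Prop :=
  is_conv lim /\ forall i : I, continuous (@limi i) lim (@phi i).

(* finality relative to the class of target convergence objects satisfying P
   (P = True for C^conv, P = classical for C^conv_cl) *)
Definition is_final (C : cofcat)
  (P : forall L' : coframe, ((L' -> Prop) -> L') -> Prop)
  (lim : (L -> Prop) -> L) : Prop :=
  forall (L' : coframe) (lim' : (L' -> Prop) -> L'),
    ob C L' -> is_conv lim' -> P L' lim' ->
    forall psi : L -> L', mor C psi ->
      (continuous lim lim' psi <->
       forall i : I, continuous (@limi i) lim' (fun x => psi (@phi i x))).

Definition final_lim (F : L -> Prop) : L :=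
  inf (fun x => exists i : I, x = @phi i (@limi i (preim (@phi i) F))).

End Sink.

Arguments classical {L} lim.
Arguments is_filter {L} F.

Definition trueP (L' : coframe) (lim' : (L' -> Prop) -> L') : Prop := True.

(* The formula for [final_lim] is the meet of the upper bounds that continuity
   of each [phi i] imposes on a limit, so it is the largest convergence structure
   making the sink continuous.  It is final because a coframe morphism [psi]
   preserves that meet, so [psi] is continuous as soon as every [psi \o phi i]
   is.  Any other final lift [lim] satisfies [lim <= final_lim], and finality of
   [lim] tested on the identity into [(L, final_lim)] gives the converse.
   Classicality is inherited because coframe morphisms preserve complements, so
   the preimages of two filters with the same complemented elements again have
   the same complemented elements. *)
Set Implicit Arguments.
Unset Strict Implicit.

Lemma inf_ext (L : coframe) (S T : L -> Prop) :
  (forall x, S x <-> T x) -> inf S = inf T.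
Proof.
  intros HST. apply le_antisym; apply inf_glb; intros x Hx; apply inf_lb, HST, Hx.
Qed.

Lemma le_top (L : coframe) (x : L) : le x (top L).
Proof. apply inf_glb. intros _ []. Qed.

Lemma sup2_idPr (L : coframe) (a b : L) : le a b -> sup2 a b = b.
Proof.
  intros Hab. apply le_antisym.
  - apply sup2_lub; [exact Hab | apply le_refl].
  - apply sup2_ub_r.
Qed.

Section CoframeMorphism.
Variables (L L' : coframe) (f : L -> L').
Hypothesis (Hf : is_cofrm_mor f).

Lemma cofrm_mor_mono (a b : L) : le a b -> le (f a) (f b).
Proof.
  intros Hab. rewrite <- (sup2_idPr Hab), (proj2 (proj2 Hf)). apply sup2_ub_l.
Qed.

Lemma cofrm_mor_meet2 (a b : L) : f (meet2 a b) = meet2 (f a) (f b).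
Proof.
  unfold meet2. rewrite (proj1 Hf). apply inf_ext. intros y; split.
  - intros [x [[-> | ->] ->]]; [left | right]; reflexivity.
  - intros [-> | ->]; [exists a | exists b]; split; auto.
Qed.

Lemma cofrm_mor_top : f (top L) = top L'.
Proof.
  unfold top. rewrite (proj1 Hf). apply inf_ext. intros y; split.
  - intros [x [[] _]].
  - intros [].
Qed.

Lemma cofrm_mor_complemented (a : L) : complemented a -> complemented (f a).
Proof.
  intros [b [Hmeet Hsup]]. exists (f b). split.
  - rewrite <- cofrm_mor_meet2, Hmeet. exact (proj1 (proj2 Hf)).
  - rewrite <- (proj2 (proj2 Hf)), Hsup. exact cofrm_mor_top.
Qed.

Lemma preim_filter (F : L' -> Prop) : is_filter F -> is_filter (preim f F).
Proof.
  intros [[x Hx] [Hup Hmeet]]. unfold preim. split; [|split].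
  - exists (top L). rewrite cofrm_mor_top. apply (Hup x); [exact Hx | apply le_top].
  - intros a b Ha Hab. apply (Hup (f a)); [exact Ha | apply cofrm_mor_mono, Hab].
  - intros a b Ha Hb. rewrite cofrm_mor_meet2. apply Hmeet; assumption.
Qed.

End CoframeMorphism.

Lemma continuous_comp (L1 L2 L3 : coframe) (lim1 : (L1 -> Prop) -> L1)
  (lim2 : (L2 -> Prop) -> L2) (lim3 : (L3 -> Prop) -> L3)
  (f : L1 -> L2) (g : L2 -> L3) :
  is_cofrm_mor g -> continuous lim1 lim2 f -> continuous lim2 lim3 g ->
  continuous lim1 lim3 (fun x => g (f x)).
Proof.
  intros Hg Hf_cont Hg_cont F HF.
  apply le_trans with (g (lim2 (preim g F))); [exact (Hg_cont F HF) |].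
  apply (cofrm_mor_mono Hg), Hf_cont, (preim_filter Hg), HF.
Qed.

Unset Implicit Arguments.

Section FinalLift.
Context {C : cofcat} {L : coframe} {I : Type} {Li : I -> coframe}
  {limi : forall i, (Li i -> Prop) -> Li i} {phi : forall i, Li i -> L}.
Hypotheses (Hconv : forall i, is_conv (limi i)) (Hphi : forall i, mor C (phi i)).

Let Hphi_cofrm (i : I) : is_cofrm_mor (phi i) := mor_cofrm (Hphi i).

Lemma final_lim_conv : is_conv (final_lim limi phi).
Proof.
  intros F G HF HG HFG. apply inf_glb. intros x [i ->].
  apply le_trans with (phi i (limi i (preim (phi i) F))).
  - apply inf_lb. exists i. reflexivity.
  - apply (cofrm_mor_mono (Hphi_cofrm i)), Hconv.
    + apply (preim_filter (Hphi_cofrm i)), HF.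
    + apply (preim_filter (Hphi_cofrm i)), HG.
    + intros a. apply HFG.
Qed.

Lemma final_lim_lift : is_lift limi phi (final_lim limi phi).
Proof.
  split; [exact final_lim_conv |].
  intros i F _. apply inf_lb. exists i. reflexivity.
Qed.

Lemma lift_le_final_lim {lim : (L -> Prop) -> L} {F : L -> Prop} :
  is_lift limi phi lim -> is_filter F -> le (lim F) (final_lim limi phi F).
Proof.
  intros [_ Hcont] HF. apply inf_glb. intros x [i ->]. apply Hcont, HF.
Qed.

Lemma final_lim_final (P : forall L' : coframe, ((L' -> Prop) -> L') -> Prop) :
  is_final limi phi C P (final_lim limi phi).
Proof.
  intros L' lim' _ _ _ psi Hpsi. pose proof (mor_cofrm Hpsi) as Hpsi_cofrm. split.
  - intros Hcont i. exact (continuous_comp Hpsi_cofrm (proj2 final_lim_lift i) Hcont).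
  - intros Hcont F HF. unfold final_lim. rewrite (proj1 Hpsi_cofrm).
    apply inf_glb. intros y [x [[i ->] ->]]. apply Hcont, HF.
Qed.

Hypothesis (HL : ob C L).

Lemma final_lift_unique (P : forall L' : coframe, ((L' -> Prop) -> L') -> Prop)
  (lim : (L -> Prop) -> L) :
  P L (final_lim limi phi) -> is_lift limi phi lim -> is_final limi phi C P lim ->
  forall F, is_filter F -> lim F = final_lim limi phi F.
Proof.
  intros HP Hlift Hfinal F HF. apply le_antisym; [exact (lift_le_final_lim Hlift HF) |].
  assert (Hid_cont : continuous lim (final_lim limi phi) (fun x => x)).
  { apply (Hfinal L (final_lim limi phi) HL final_lim_conv HP _ (mor_id HL)).
    exact (proj2 final_lim_lift). }
  exact (Hid_cont F HF).
Qed.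

Lemma final_lim_classical :
  (forall i, classical (limi i)) -> classical (final_lim limi phi).
Proof.
  intros Hcl F G HF HG HFG.
  assert (Hpreim : forall i, limi i (preim (phi i) F) = limi i (preim (phi i) G)).
  { intros i. apply Hcl.
    - apply (preim_filter (Hphi_cofrm i)), HF.
    - apply (preim_filter (Hphi_cofrm i)), HG.
    - intros a Ha. apply HFG, (cofrm_mor_complemented (Hphi_cofrm i)), Ha. }
  unfold final_lim. apply inf_ext. intros x.
  split; intros [i ->]; exists i; rewrite Hpreim; reflexivity.
Qed.

End FinalLift.

Theorem mainTheorem7 (C : cofcat) (L : coframe) (I : Type) (Li : I -> coframe)
  (limi : forall i, (Li i -> Prop) -> Li i) (phi : forall i, Li i -> L) :
  ob C L -> (forall i, ob C (Li i)) -> (forall i, is_conv (limi i)) ->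
  (forall i, mor C (phi i)) ->
  (* the sink has a unique final lift in C^conv, given by final_lim *)
  (is_lift limi phi (final_lim limi phi) /\
   is_final limi phi C trueP (final_lim limi phi) /\
   (forall lim, is_lift limi phi lim -> is_final limi phi C trueP lim ->
      forall F, is_filter F -> lim F = final_lim limi phi F)) /\
  (* the same in the full subcategory of classical convergence objects *)
  ((forall i, classical (limi i)) ->
   classical (final_lim limi phi) /\
   is_lift limi phi (final_lim limi phi) /\
   is_final limi phi C (@classical) (final_lim limi phi) /\
   (forall lim, classical lim -> is_lift limi phi lim ->
      is_final limi phi C (@classical) lim ->
      forall F, is_filter F -> lim F = final_lim limi phi F)).
Proof.
  intros HL _ Hconv Hphi.
  pose proof (final_lim_lift Hconv Hphi) as Hlift.
  split.
  - split; [exact Hlift |]. split; [exact (final_lim_final Hconv Hphi trueP) |].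
    intros lim. exact (final_lift_unique Hconv Hphi HL trueP lim Logic.I).
  - intros Hcl. pose proof (final_lim_classical Hphi Hcl) as Hfl_cl.
    split; [exact Hfl_cl |]. split; [exact Hlift |].
    split; [exact (final_lim_final Hconv Hphi (@classical)) |].
    intros lim _. exact (final_lift_unique Hconv Hphi HL (@classical) lim Hfl_cl).
Qed.
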